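(* Let $n$ be a nonnegative integer and $\delta\in\{1,2\}$. Suppose there exist a nonnegative integer $B$ and integers $x,y,z$ such that $$\frac{2n+(3\delta+4)B}{3}-(3\delta+4)B^2=x^2+2y^2+3\delta z^2+(x+2y+3\delta z)^2<(B+1)^2.$$ Then there exist nonnegative integers $w_0,x_0,y_0,z_0$ with $n=p_5(w_0)+p_5(x_0)+2p_5(y_0)+3\delta\, p_5(z_0)$.
   Context: For $k\in\mathbb{Z}$, $p_5(k)=k(3k-1)/2$. *)

From Stdlib Require Import ZArith QArith.
Open Scope Z_scope.
(* pentagonal numbers p_5(k) = k(3k-1)/2 ; k(3k-1) is always even *)
Definition p5 (k : Z) : Z := k * (3 * k - 1) / 2.

(* Shifting all four variables by B is the whole proof: since the linear
   forms x, -(x + 2y + cz), y, z cancel in 2 p5(B + t) = 3(B + t)^2 - (B + t),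
   the weighted sum of 2 p5(B + t) over these four shifts equals
   3 (S + (c + 4) B^2) - (c + 4) B, which is 2n by hypothesis.  Each square
   t^2 is at most S < (B + 1)^2, so |t| <= B and every B + t is nonnegative. *)

From Stdlib Require Import ZArith QArith Lia.
Open Scope Z_scope.

Definition ternary_form (c x y z : Z) : Z :=
  x ^ 2 + 2 * y ^ 2 + c * z ^ 2 + (x + 2 * y + c * z) ^ 2.

Lemma p5_double (k : Z) : 2 * p5 k = k * (3 * k - 1).
Proof.
  assert (Heven : exists q, k * (3 * k - 1) = q * 2).
  { destruct (Zeven_odd_dec k) as [Hk | Hk];
      [apply Zeven_ex in Hk | apply Zodd_ex in Hk]; destruct Hk as [j ->].
    - exists (j * (6 * j - 1)); ring.
    - exists ((2 * j + 1) * (3 * j + 1)); ring. }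
  destruct Heven as [q Hq].
  unfold p5; rewrite Hq, Z.div_mul by lia; ring.
Qed.

Lemma p5_shift_sum (c B x y z : Z) :
  2 * (p5 (B + x) + p5 (B - (x + 2 * y + c * z)) + 2 * p5 (B + y) + c * p5 (B + z))
  = 3 * (ternary_form c x y z + (c + 4) * B ^ 2) - (c + 4) * B.
Proof.
  transitivity (2 * p5 (B + x) + 2 * p5 (B - (x + 2 * y + c * z))
                + 2 * (2 * p5 (B + y)) + c * (2 * p5 (B + z))); [ring |].
  rewrite !p5_double; unfold ternary_form; ring.
Qed.

Lemma shift_nonneg_of_sq_lt (B t : Z) : 0 <= B -> t ^ 2 < (B + 1) ^ 2 -> 0 <= B + t.
Proof. nia. Qed.

Lemma ternary_form_bounds (c x y z : Z) : 1 <= c ->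
  x ^ 2 <= ternary_form c x y z /\ y ^ 2 <= ternary_form c x y z /\
  z ^ 2 <= ternary_form c x y z /\
  (x + 2 * y + c * z) ^ 2 <= ternary_form c x y z.
Proof.
  intros Hc; unfold ternary_form.
  assert (Hz : z ^ 2 <= c * z ^ 2) by nia.
  pose proof (Z.square_nonneg x); pose proof (Z.square_nonneg y);
    pose proof (Z.square_nonneg z); pose proof (Z.square_nonneg (x + 2 * y + c * z)).
  rewrite !Z.pow_2_r in *; lia.
Qed.

Lemma Qeq_div3_sub_inj (a b s : Z) :
  (inject_Z a / inject_Z 3 - inject_Z b == inject_Z s)%Q -> a = 3 * (s + b).
Proof.
  intros Hq; unfold Qeq, Qminus, Qplus, Qopp, Qdiv, Qmult, Qinv, inject_Z in Hq;
    simpl in Hq; lia.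
Qed.

Lemma p5_sum_of_ternary_form (c n B x y z : Z) :
  1 <= c -> 0 <= B ->
  2 * n + (c + 4) * B = 3 * (ternary_form c x y z + (c + 4) * B ^ 2) ->
  ternary_form c x y z < (B + 1) ^ 2 ->
  exists w0 x0 y0 z0 : Z,
    0 <= w0 /\ 0 <= x0 /\ 0 <= y0 /\ 0 <= z0 /\
    n = p5 w0 + p5 x0 + 2 * p5 y0 + c * p5 z0.
Proof.
  intros Hc HB Hn HS.
  destruct (ternary_form_bounds c x y z Hc) as [Hx [Hy [Hz Hw]]].
  exists (B + x), (B - (x + 2 * y + c * z)), (B + y), (B + z).
  repeat split; try (apply shift_nonneg_of_sq_lt; lia).
  pose proof (p5_shift_sum c B x y z); lia.
Qed.

Theorem lemma4p2 (n : Z) (delta : Z) :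
  0 <= n ->
  (delta = 1 \/ delta = 2) ->
  (exists B x y z : Z,
     0 <= B /\
     let S := x ^ 2 + 2 * y ^ 2 + 3 * delta * z ^ 2 + (x + 2 * y + 3 * delta * z) ^ 2 in
     ((inject_Z (2 * n + (3 * delta + 4) * B) / inject_Z 3
        - inject_Z ((3 * delta + 4) * B ^ 2)) == inject_Z S)%Q /\
     S < (B + 1) ^ 2) ->
  exists w0 x0 y0 z0 : Z,
    0 <= w0 /\ 0 <= x0 /\ 0 <= y0 /\ 0 <= z0 /\
    n = p5 w0 + p5 x0 + 2 * p5 y0 + 3 * delta * p5 z0.
Proof.
  intros _ Hdelta [B [x [y [z [HB [HQ HS]]]]]]; cbv zeta in HQ, HS.
  apply Qeq_div3_sub_inj in HQ.
  apply (p5_sum_of_ternary_form (3 * delta) n B x y z); [lia | exact HB | exact HQ | exact HS].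
Qed.
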